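(* Let $L|K$ be a field extension and assume that $L$ admits a $K$-rational place $\xi$. Then the map $\iota:M(K)\to M(L)$, $\zeta\mapsto\zeta\circ\xi$, is a continuous injective map compatible with restriction.
   Context: A $K$-rational place of $L$ is a place of $L$ which is the identity on $K$ and whose image is $K\cup\{\infty\}$. For a field $K$, $M(K)$ is the set of $\mathbb R$-places $K\to\mathbb R\cup\{\infty\}$, with topology generated by the subbasis $H'(b)=\{\zeta\in M(K)\mid \infty\ne\zeta(b)>0\}$, $b\in K$. A map $\iota:M(K)\to M(L)$ is compatible with restriction if $\iota(\zeta)|_K=\zeta$ for all $\zeta\in M(K)$. *)

From mathcomp Require Import all_boot all_order all_algebra.
From mathcomp Require Import reals.
Set Implicit Arguments. Unset Strict Implicit. Unset Printing Implicit Defensive.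
Import Order.TTheory GRing.Theory Num.Theory.
Local Open Scope ring_scope.

(* A place of the field F with values in E \cup {oo}; [None] encodes oo.
   Axioms: the finite locus O = {x | phi x <> oo} is a subring on which phi
   is a ring morphism, and for x <> 0, phi x = oo iff phi (x^-1) = 0
   (so O is a valuation ring with maximal ideal phi^-1(0)). *)
Definition is_place (F E : fieldType) (phi : F -> option E) : Prop :=
  [/\ phi 1 = Some 1,
      (forall x a, phi x = Some a -> phi (- x) = Some (- a)),
      (forall x y a b, phi x = Some a -> phi y = Some b ->
          phi (x + y) = Some (a + b)),
      (forall x y a b, phi x = Some a -> phi y = Some b ->
          phi (x * y) = Some (a * b)) &
      (forall x, x != 0 -> (phi x = None <-> phi x^-1 = Some 0))].

Definition K_rational_place (K L : fieldType) (sigma : {rmorphism K -> L})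
  (xi : L -> option K) : Prop :=
  is_place xi /\ forall k, xi (sigma k) = Some k.

Definition Mset (R : realType) (K : fieldType) (zeta : K -> option R) : Prop :=
  is_place zeta.

Definition Hsub (R : realType) (K : fieldType) (b : K) (zeta : K -> option R) : Prop :=
  Mset zeta /\ exists r : R, zeta b = Some r /\ 0 < r.

(* Open subsets of M(K) for the topology generated by the subbasis H'(b):
   unions of finite intersections of subbasic sets (the empty intersection
   being all of M(K)). *)
Definition Mopen (R : realType) (K : fieldType) (U : (K -> option R) -> Prop) : Prop :=
  (forall zeta, U zeta -> Mset zeta) /\
  forall zeta, U zeta ->
    exists s : seq K,
      (forall b, b \in s -> Hsub b zeta) /\
      (forall eta, Mset eta -> (forall b, b \in s -> Hsub b eta) -> U eta).

Definition Mcontinuous (R : realType) (K L : fieldType)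
  (f : (K -> option R) -> (L -> option R)) : Prop :=
  forall V : (L -> option R) -> Prop, Mopen V ->
    Mopen (fun zeta : K -> option R => Mset zeta /\ V (f zeta)).

Definition comp_place (K L E : Type) (zeta : K -> option E) (xi : L -> option K) :
  L -> option E :=
  fun x => match xi x with Some a => zeta a | None => None end.

(* Composing an R-place of K with the K-rational place xi of L gives an R-place
   of L; since xi fixes K, restricting back to K recovers the original place,
   which gives compatibility with restriction and injectivity.  For continuity,
   the preimage of a subbasic set H'(b) of M(L) is the subbasic set H'(xi b) of
   M(K) when xi b is finite, and empty otherwise. *)
From mathcomp Require Import all_boot all_order all_algebra.
From mathcomp Require Import reals.
From Stdlib Require Import FunctionalExtensionality.
Set Implicit Arguments.
Unset Strict Implicit.
Unset Printing Implicit Defensive.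
Import GRing.Theory.
Local Open Scope ring_scope.

Section Places.

Variables F E : fieldType.
Variable phi : F -> option E.
Hypothesis phiP : is_place phi.

Lemma place0 : phi 0 = Some 0.
Proof.
case: phiP => phi1 phiN phiD _ _.
by have := phiD _ _ _ _ phi1 (phiN _ _ phi1); rewrite !subrr.
Qed.

Lemma placeV x c : phi x = Some c -> c != 0 -> phi x^-1 = Some c^-1.
Proof.
case: (phiP) => phi1 _ _ phiM phiI phix c_neq0.
have x_neq0 : x != 0.
  by apply: contraNneq c_neq0 => x0; move: phix; rewrite x0 place0 => -[<-].
case phixV: (phi x^-1) => [d|]; last first.
  have := proj1 (phiI _ (invr_neq0 x_neq0)) phixV.
  by rewrite invrK phix => -[c0]; rewrite c0 eqxx in c_neq0.
have := phiM _ _ _ _ phix phixV; rewrite mulfV // phi1 => -[cd].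
by rewrite -[d](mulKf c_neq0) -cd mulr1.
Qed.

End Places.

Lemma comp_place_is_place (F G E : fieldType) (xi : F -> option G)
    (zeta : G -> option E) :
  is_place xi -> is_place zeta -> is_place (comp_place zeta xi).
Proof.
move=> xiP zetaP; have zeta0 := place0 zetaP.
case: (xiP) => xi1 xiN xiD xiM xiI; case: (zetaP) => zeta1 zetaN zetaD zetaM zetaI.
rewrite /comp_place; split.
- by rewrite xi1 zeta1.
- move=> x a; case xix: (xi x) => [c|] // zetac.
  by rewrite (xiN _ _ xix); apply: zetaN.
- move=> x y a b; case xix: (xi x) => [c|] //; case xiy: (xi y) => [d|] // zc zd.
  by rewrite (xiD _ _ _ _ xix xiy); apply: zetaD.
- move=> x y a b; case xix: (xi x) => [c|] //; case xiy: (xi y) => [d|] // zc zd.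
  by rewrite (xiM _ _ _ _ xix xiy); apply: zetaM.
move=> x x_neq0; case xix: (xi x) => [c|]; last by rewrite (proj1 (xiI _ x_neq0) xix) zeta0.
have [c0|c_neq0] := eqVneq c 0; last by rewrite (placeV xiP xix c_neq0); apply: zetaI.
have -> : xi x^-1 = None by apply/(xiI _ (invr_neq0 x_neq0)); rewrite invrK xix c0.
by rewrite c0 zeta0.
Qed.

Lemma comp_place_Hsub (R : realType) (F G : fieldType) (xi : F -> option G)
    (zeta : G -> option R) b c :
  is_place xi -> Mset zeta -> xi b = Some c ->
  Hsub b (comp_place zeta xi) <-> Hsub c zeta.
Proof.
move=> xiP zetaP xib; rewrite /Hsub /comp_place xib.
by split=> -[_ zetac]; split=> //; apply: comp_place_is_place.
Qed.

Lemma comp_place_continuous (R : realType) (F G : fieldType) (xi : F -> option G) :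
  is_place xi -> Mcontinuous (fun zeta : G -> option R => comp_place zeta xi).
Proof.
move=> xiP V [_ Vopen]; split=> [zeta [] //|zeta [zetaP Vzeta]].
have [s [Hs_zeta Hs_open]] := Vopen _ Vzeta.
have xi_finite b : b \in s -> exists c, xi b = Some c.
  move=> bs; have [_ [r []]] := Hs_zeta _ bs.
  by rewrite /comp_place; case: (xi b) => [c|] // _ _; exists c.
exists (pmap xi s); split=> [c | eta etaP Hs_eta].
  rewrite mem_pmap => /mapP [b bs xib].
  by apply/(comp_place_Hsub xiP zetaP (esym xib))/Hs_zeta.
split=> //; apply: Hs_open; first exact: comp_place_is_place.
move=> b bs; have [c xib] := xi_finite b bs.
apply/(comp_place_Hsub xiP etaP xib)/Hs_eta.
by rewrite mem_pmap -xib map_f.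
Qed.

Theorem theorem9p1 (R : realType) (K L : fieldType) (sigma : {rmorphism K -> L})
  (xi : L -> option K) :
  K_rational_place sigma xi ->
  [/\ (forall zeta : K -> option R, Mset zeta -> Mset (comp_place zeta xi)),
      (forall z1 z2 : K -> option R, Mset z1 -> Mset z2 ->
          comp_place z1 xi = comp_place z2 xi -> z1 = z2),
      (forall zeta : K -> option R, Mset zeta ->
          forall k : K, comp_place zeta xi (sigma k) = zeta k) &
      Mcontinuous (fun zeta : K -> option R => comp_place zeta xi)].
Proof.
move=> [xiP xi_sigma].
have restrict (zeta : K -> option R) k : comp_place zeta xi (sigma k) = zeta k.
  by rewrite /comp_place xi_sigma.
split=> [zeta|z1 z2 _ _ z12|zeta _ k|].
- exact: comp_place_is_place.
- by apply: functional_extensionality => k; rewrite -!restrict z12.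
- exact: restrict.
- exact: comp_place_continuous.
Qed.
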